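(* For each $n\in\mathbb{N}$, if a labelled formula $w:\phi$ (with $\phi\in\mathcal{L}^1$) is derivable in $\mathsf{Ldm}_{n}^{1}\mathsf{L}$, then it has a derivation in $\mathsf{Ldm}_{n}^{1}\mathsf{L}$ in which every sequent is forestlike.
   Context: Single-agent setting: $Ag=\{1\}$. Formulas $\phi ::= p \mid \overline{p} \mid (\phi\wedge\phi) \mid (\phi\vee\phi) \mid \Box\phi \mid \Diamond\phi \mid [1]\phi \mid \langle 1\rangle\phi$. A labelled sequent $\mathcal{R},\Gamma$ consists of a multiset $\mathcal{R}$ of relational atoms $\mathcal{R}_1xy$ and a multiset $\Gamma$ of labelled formulas $x:\phi$. Calculus $\mathsf{Ldm}_{n}^{1}\mathsf{L}$ (premise(s) / conclusion; derivations are finite trees with $(\mathsf{id})$ leaves): $(\mathsf{id})$: / $\mathcal{R}, w:p, w:\overline{p},\Gamma$. $(\wedge)$: $\mathcal{R}, w:\phi\wedge\psi, w:\phi,\Gamma$ and $\mathcal{R}, w:\phi\wedge\psi, w:\psi,\Gamma$ / $\mathcal{R}, w:\phi\wedge\psi,\Gamma$. $(\vee)$: $\mathcal{R}, w:\phi\vee\psi, w:\phi, w:\psi,\Gamma$ / $\mathcal{R}, w:\phi\vee\psi,\Gamma$. $(\Box)$: $\mathcal{R}, w:\Box\phi, v:\phi,\Gamma$ / $\mathcal{R}, w:\Box\phi,\Gamma$ ($v$ fresh). $(\Diamond)$: $\mathcal{R}, w:\Diamond\phi, u:\phi,\Gamma$ / $\mathcal{R}, w:\Diamond\phi,\Gamma$.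 $(\mathsf{IOA})$: $\mathcal{R},\mathcal{R}_1uv,\Gamma$ / $\mathcal{R},\Gamma$ ($v$ fresh). $([1])$: $\mathcal{R},\mathcal{R}_1wv, w:[1]\phi, v:\phi,\Gamma$ / $\mathcal{R}, w:[1]\phi,\Gamma$ ($v$ fresh). $(\mathsf{Pr}_1)$: $\mathcal{R}, w:\langle 1\rangle\phi, u:\phi,\Gamma$ / $\mathcal{R}, w:\langle 1\rangle\phi,\Gamma$, applicable only if $w=u$ or there are labels $w=z_0,\dots,z_k=u$ ($k\ge1$) with $\mathcal{R}_1z_lz_{l+1}\in\mathcal{R}$ or $\mathcal{R}_1z_{l+1}z_l\in\mathcal{R}$ for each $l<k$. $(\mathsf{APC}^1_n)$ (only if $n>0$): premises $\mathcal{R},\mathcal{R}_1w_kw_j,\Gamma$ for all $0\le k\le n-1$, $k+1\le j\le n$ / $\mathcal{R},\Gamma$. ''Fresh'' means not occurring in the conclusion. Forestlike sequents. The graph $G(\Lambda)$ of a sequent $\Lambda$ has the labels of $\Lambda$ as vertices and a directed edge $(x,y)$ for each $\mathcal{R}_1xy\in\Lambda$. A graph is a tree iff it has a node (root) with exactly one directed path to every other node; a forest is a disjoint union of trees. $\Lambda$ is forestlike iff $G(\Lambda)$ is a forest. *)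

From Stdlib Require Import List Arith Relations.
Import ListNotations.

(* Formulas of L^1 in negation normal form. *)
Inductive form : Type :=
| Var  : nat -> form
| NVar : nat -> form
| And  : form -> form -> form
| Or   : form -> form -> form
| Box  : form -> form
| Dia  : form -> form
| Stit : form -> form
| DStit : form -> form.

Definition label := nat.

(* A labelled sequent R, Gamma: multisets represented by lists.
   fst = relational atoms R_1 x y (as pairs (x,y)),
   snd = labelled formulas x : phi (as pairs (x,phi)). *)
Definition sequent : Type := (list (label * label) * list (label * form))%type.

Definition labels (S : sequent) : list label :=
  flat_map (fun e => [fst e; snd e]) (fst S) ++ map fst (snd S).

Definition fresh (v : label) (S : sequent) : Prop := ~ In v (labels S).

Definition linked (R : list (label * label)) : label -> label -> Prop :=
  clos_refl_trans label (fun x y => In (x, y) R \/ In (y, x) R).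

(* derivP n P S : S has a derivation in Ldm_n^1 L all of whose sequents satisfy P.
   Multiset rules are stated on list representatives: the principal formula is
   required to occur (In) in the conclusion, and premises add the auxiliary
   atoms in front. *)
Inductive derivP (n : nat) (P : sequent -> Prop) : sequent -> Prop :=
| d_id : forall R G w p,
    P (R, G) -> In (w, Var p) G -> In (w, NVar p) G -> derivP n P (R, G)
| d_and : forall R G w A B,
    P (R, G) -> In (w, And A B) G ->
    derivP n P (R, (w, A) :: G) -> derivP n P (R, (w, B) :: G) ->
    derivP n P (R, G)
| d_or : forall R G w A B,
    P (R, G) -> In (w, Or A B) G ->
    derivP n P (R, (w, A) :: (w, B) :: G) -> derivP n P (R, G)
| d_box : forall R G w v A,
    P (R, G) -> In (w, Box A) G -> fresh v (R, G) ->
    derivP n P (R, (v, A) :: G) -> derivP n P (R, G)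
| d_dia : forall R G w u A,
    P (R, G) -> In (w, Dia A) G ->
    derivP n P (R, (u, A) :: G) -> derivP n P (R, G)
| d_ioa : forall R G u v,
    P (R, G) -> fresh v (R, G) ->
    derivP n P ((u, v) :: R, G) -> derivP n P (R, G)
| d_stit : forall R G w v A,
    P (R, G) -> In (w, Stit A) G -> fresh v (R, G) ->
    derivP n P ((w, v) :: R, (v, A) :: G) -> derivP n P (R, G)
| d_pr : forall R G w u A,
    P (R, G) -> In (w, DStit A) G -> linked R w u ->
    derivP n P (R, (u, A) :: G) -> derivP n P (R, G)
| d_apc : forall R G (ws : nat -> label),
    P (R, G) -> 0 < n ->
    (forall k j, k < j -> j <= n -> derivP n P ((ws k, ws j) :: R, G)) ->
    derivP n P (R, G).

Definition derivable (n : nat) (S : sequent) : Prop := derivP n (fun _ => True) S.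

(* Directed walks in the multigraph G(S): a list of indices of R_1-atoms in R. *)
Fixpoint walk (R : list (label * label)) (x y : label) (es : list nat) : Prop :=
  match es with
  | [] => x = y
  | i :: es' => exists z, nth_error R i = Some (x, z) /\ walk R z y es'
  end.

Definition unique_path (R : list (label * label)) (x y : label) : Prop :=
  exists es, walk R x y es /\ forall es', walk R x y es' -> es' = es.

(* G(S) is a forest: its vertices split into classes (comp) with no edge between
   distinct classes, and each class is a tree: it has a root with exactly one
   directed path to every other vertex of the class. *)
Definition forestlike (S : sequent) : Prop :=
  exists comp : label -> nat,
    (forall x y, In (x, y) (fst S) -> comp x = comp y) /\
    (forall c, (exists x, In x (labels S) /\ comp x = c) ->
       exists r, In r (labels S) /\ comp r = c /\
         forall x, In x (labels S) -> comp x = c -> x <> r ->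
           unique_path (fst S) r x).

From Stdlib Require Import List.
Import ListNotations.
From Stdlib Require Import Arith Relations Lia Classical.

(** A derivation of [R, Γ] is replayed on a forest [R'] of relational atoms
    that links the same labels as [R] and uses no new labels.  The rules
    (IOA) and ([1]) add an edge to a fresh label, i.e. a new leaf, and
    (Pr_1) only depends on which labels are linked.  For (APC) either two of
    the labels [w_k], [w_j] already lie in one tree of [R'], and then the
    premise with the atom [R_1 w_k w_j] can replace the whole rule, or they
    all lie in distinct trees, and (APC) is applied to the roots of these
    trees instead: each premise then adds an edge between two roots, which
    merges two trees into one. *)

Definition rlabels (R : list (label * label)) : list label :=
  flat_map (fun e => [fst e; snd e]) R.

Definition forest (R : list (label * label)) : Prop :=
  NoDup (map snd R) /\ exists rk : label -> nat, forall x y, In (x, y) R -> rk x < rk y.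

Lemma forest_nil : forest [].
Proof. split; [constructor | exists (fun _ => 0); intros x y []]. Qed.

Lemma rlabels_incl_labels R G : incl (rlabels R) (labels (R, G)).
Proof. apply incl_appl, incl_refl. Qed.

Lemma labels_incl_cons_form R G e : incl (labels (R, G)) (labels (R, e :: G)).
Proof. apply incl_app_app; [apply incl_refl | apply incl_tl, incl_refl]. Qed.

Lemma labels_incl_cons_rel R G e : incl (labels (R, G)) (labels (e :: R, G)).
Proof. do 2 apply incl_tl; apply incl_refl. Qed.

Lemma rlabels_incl_cons R R' G e :
  incl (rlabels R') (labels (R, G)) -> incl (rlabels (e :: R')) (labels (e :: R, G)).
Proof. intros H z [<- | [<- | Hz]]; simpl; auto. Qed.

Lemma fresh_restrict R R' G v :
  incl (rlabels R') (labels (R, G)) -> fresh v (R, G) -> fresh v (R', G).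
Proof.
  unfold fresh, labels; simpl; intros HR Hv Hin; apply Hv.
  apply in_app_iff in Hin as [Hin | Hin]; [apply HR, Hin | apply in_or_app; right; exact Hin].
Qed.

Lemma linked_edge R x y : In (x, y) R -> linked R x y.
Proof. intros H; apply rt_step; left; exact H. Qed.

Lemma linked_sym R x y : linked R x y -> linked R y x.
Proof.
  induction 1 as [x y [H | H] | x | x y z _ IHxy _ IHyz].
  - apply rt_step; right; exact H.
  - apply rt_step; left; exact H.
  - apply rt_refl.
  - eapply rt_trans; eauto.
Qed.

Lemma linked_incl R R' :
  (forall x y, In (x, y) R -> linked R' x y) -> inclusion label (linked R) (linked R').
Proof.
  intros HR a b; induction 1 as [x y [H | H] | x | x y z _ IHxy _ IHyz].
  - apply HR, H.
  - apply linked_sym, HR, H.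
  - apply rt_refl.
  - eapply rt_trans; eauto.
Qed.

Lemma linked_mono R R' : incl R R' -> inclusion label (linked R) (linked R').
Proof. intros HR; apply linked_incl; intros x y H; apply linked_edge, HR, H. Qed.

Lemma linked_cons_r R e x y : linked R x y -> linked (e :: R) x y.
Proof. apply linked_mono, incl_tl, incl_refl. Qed.

Lemma linked_cons R R' x y :
  inclusion label (linked R) (linked R') -> linked R' x y ->
  inclusion label (linked ((x, y) :: R)) (linked R').
Proof.
  intros HL Hxy; apply linked_incl; intros a b [E | E].
  - injection E as <- <-; exact Hxy.
  - apply HL, linked_edge, E.
Qed.

Lemma linked_cons_cons R R' x y :
  inclusion label (linked R) (linked R') ->
  inclusion label (linked ((x, y) :: R)) (linked ((x, y) :: R')).
Proof.
  intros HL; apply linked_cons; [| apply linked_edge; left; reflexivity].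
  intros a b H; apply linked_cons_r, HL, H.
Qed.

Lemma walk_app R a b c es1 es2 :
  walk R a b es1 -> walk R b c es2 -> walk R a c (es1 ++ es2).
Proof.
  revert a; induction es1 as [| i es1 IH]; simpl; intros a H1 H2.
  - subst; exact H2.
  - destruct H1 as [z [Hi Hz]]; exists z; split; [exact Hi | eapply IH; eauto].
Qed.

Lemma walk_snoc_inv R a x es i :
  walk R a x (es ++ [i]) -> exists p, walk R a p es /\ nth_error R i = Some (p, x).
Proof.
  revert a; induction es as [| j es IH]; simpl; intros a H.
  - destruct H as [z [Hi <-]]; exists a; split; [reflexivity | exact Hi].
  - destruct H as [z [Hj Hz]]; destruct (IH z Hz) as [p [Hp Hi]].
    exists p; split; [exists z; auto | exact Hi].
Qed.

Lemma walk_linked R a b es : walk R a b es -> linked R a b.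
Proof.
  revert a; induction es as [| i es IH]; simpl; intros a H.
  - subst; apply rt_refl.
  - destruct H as [z [Hi Hz]]; apply rt_trans with z.
    + apply linked_edge; eapply nth_error_In; eauto.
    + apply IH, Hz.
Qed.

Lemma walk_source R a b es : walk R a b es -> a = b \/ In a (rlabels R).
Proof.
  destruct es as [| i es]; simpl; [auto |].
  intros [z [Hi _]]; right; apply in_flat_map.
  exists (a, z); split; [eapply nth_error_In; eauto | left; reflexivity].
Qed.

Fixpoint parent (R : list (label * label)) (x : label) : option label :=
  match R with
  | [] => None
  | (a, b) :: R' => if Nat.eqb b x then Some a else parent R' x
  end.

Lemma parent_sound R x p : parent R x = Some p -> In (p, x) R.
Proof.
  induction R as [| [a b] R IH]; simpl; [discriminate |].
  destruct (Nat.eqb_spec b x) as [<- | _]; intros H.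
  - injection H as <-; left; reflexivity.
  - right; auto.
Qed.

Lemma parent_None_not_target R x : parent R x = None -> ~ In x (map snd R).
Proof.
  induction R as [| [a b] R IH]; simpl; [auto |].
  destruct (Nat.eqb_spec b x); [discriminate |].
  intros H [E | E]; [congruence | exact (IH H E)].
Qed.

Lemma parent_of_edge R x p : NoDup (map snd R) -> In (p, x) R -> parent R x = Some p.
Proof.
  induction R as [| [a b] R IH]; simpl; [tauto |].
  intros ND [E | E]; inversion ND as [| ? ? Hb Hnd]; subst.
  - injection E as -> ->; rewrite Nat.eqb_refl; reflexivity.
  - destruct (Nat.eqb_spec b x) as [-> | _]; [| auto].
    exfalso; apply Hb, (in_map snd _ _ E).
Qed.

Lemma edge_index_unique (R : list (label * label)) i j p q x :
  NoDup (map snd R) -> nth_error R i = Some (p, x) -> nth_error R j = Some (q, x) -> i = j.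
Proof.
  intros ND Hi Hj.
  apply (map_nth_error snd) in Hi, Hj.
  apply (proj1 (NoDup_nth_error _) ND).
  - apply nth_error_Some; rewrite Hi; discriminate.
  - rewrite Hi, Hj; reflexivity.
Qed.

(** Walks are determined backwards, since every label has at most one
    incoming atom. *)
Lemma walk_unique R a x es1 es2 : NoDup (map snd R) -> parent R a = None ->
  walk R a x es1 -> walk R a x es2 -> es1 = es2.
Proof.
  intros ND Ha; revert x es2.
  induction es1 as [| i es1 IH] using rev_ind; intros x es2 H1 H2;
    destruct es2 as [| j es2 _] using rev_ind; try reflexivity.
  - simpl in H1; subst x; apply walk_snoc_inv in H2 as [p [_ Hj]].
    apply nth_error_In, (parent_of_edge _ _ _ ND) in Hj; congruence.
  - simpl in H2; subst x; apply walk_snoc_inv in H1 as [p [_ Hi]].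
    apply nth_error_In, (parent_of_edge _ _ _ ND) in Hi; congruence.
  - apply walk_snoc_inv in H1 as [p [Hp Hi]], H2 as [q [Hq Hj]].
    assert (i = j) as <- by (eapply edge_index_unique; eauto).
    rewrite Hi in Hj; injection Hj as <-; f_equal; eapply IH; eauto.
Qed.

Lemma forest_cons_fresh R u v :
  forest R -> ~ In v (rlabels R) -> u <> v -> forest ((u, v) :: R).
Proof.
  intros [ND [rk Hrk]] Hv Huv; split.
  - constructor; [| exact ND].
    intros Hin; apply Hv; apply in_map_iff in Hin as [[a b] [Eb Hab]]; simpl in Eb; subst b.
    apply in_flat_map; exists (a, v); simpl; auto.
  - exists (fun x => if Nat.eqb x v then S (rk u) else rk x).
    assert (Hne : forall z, In z (rlabels R) -> Nat.eqb z v = false)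
      by (intros z Hz; apply Nat.eqb_neq; congruence).
    intros x y [E | E].
    + injection E as <- <-; rewrite Nat.eqb_refl, (proj2 (Nat.eqb_neq u v) Huv); lia.
    + rewrite !Hne by (apply in_flat_map; exists (x, y); simpl; auto).
      apply Hrk, E.
Qed.

Section Roots.

Variable R : list (label * label).
Variable rk : label -> nat.
Hypothesis targets_nodup : NoDup (map snd R).
Hypothesis rank_increasing : forall x y, In (x, y) R -> rk x < rk y.

Fixpoint root_iter (fuel : nat) (x : label) : label :=
  match fuel with
  | 0 => x
  | S fuel => match parent R x with None => x | Some p => root_iter fuel p end
  end.

(** The rank bounds the number of parent steps, so it is enough fuel. *)
Definition root (x : label) : label := root_iter (rk x) x.

Lemma root_iter_stable f f' x : rk x <= f -> rk x <= f' -> root_iter f x = root_iter f' x.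
Proof.
  revert f' x; induction f as [| f IH]; intros f' x Hf Hf';
    destruct f' as [| f']; simpl; try reflexivity;
    destruct (parent R x) eqn:E; try reflexivity;
    pose proof (rank_increasing _ _ (parent_sound _ _ _ E)); [lia | lia |].
  apply IH; lia.
Qed.

Lemma root_of_parent x p : parent R x = Some p -> root x = root p.
Proof.
  intros E; pose proof (rank_increasing _ _ (parent_sound _ _ _ E)).
  unfold root; destruct (rk x) as [| m] eqn:Ex; [lia |]; simpl; rewrite E.
  apply root_iter_stable; lia.
Qed.

Lemma root_of_orphan x : parent R x = None -> root x = x.
Proof. intros E; unfold root; destruct (rk x); simpl; [| rewrite E]; reflexivity. Qed.

Lemma root_spec x : parent R (root x) = None /\ exists es, walk R (root x) x es.
Proof.
  induction x as [x IH] using (induction_ltof1 _ rk); unfold ltof in IH.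
  destruct (parent R x) as [p |] eqn:E.
  - pose proof (parent_sound _ _ _ E) as Hpx.
    rewrite (root_of_parent _ _ E).
    destruct (IH p (rank_increasing _ _ Hpx)) as [Hroot [es Hes]].
    destruct (In_nth_error _ _ Hpx) as [i Hi].
    split; [exact Hroot |]; exists (es ++ [i]).
    eapply walk_app; [exact Hes | exists x; split; [exact Hi | reflexivity]].
  - rewrite (root_of_orphan _ E); split; [exact E | exists []; reflexivity].
Qed.

Lemma root_idem x : root (root x) = root x.
Proof. apply root_of_orphan, root_spec. Qed.

Lemma root_edge x y : In (x, y) R -> root x = root y.
Proof. intros H; symmetry; apply root_of_parent, parent_of_edge; auto. Qed.

Lemma root_linked x : linked R (root x) x.
Proof. destruct (root_spec x) as [_ [es Hes]]; eapply walk_linked; eauto. Qed.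

Lemma root_self_or_rlabel x : root x = x \/ In (root x) (rlabels R).
Proof. destruct (root_spec x) as [_ [es Hes]]; eapply walk_source; eauto. Qed.

Lemma forest_forestlike_ranked G : forestlike (R, G).
Proof.
  exists root; split; [exact root_edge |].
  intros c [x [Hx <-]]; exists (root x); split; [| split].
  - destruct (root_self_or_rlabel x) as [-> | Hr]; [exact Hx | apply rlabels_incl_labels, Hr].
  - apply root_idem.
  - intros y _ Hy _; rewrite <- Hy.
    destruct (root_spec y) as [Hroot [es Hes]].
    exists es; split; [exact Hes |].
    intros es' Hes'; eapply walk_unique; eauto.
Qed.

(** The new edge goes into a root, and its tree is ranked above the other. *)
Lemma forest_link_roots a b : root a <> root b -> forest ((root a, root b) :: R).
Proof.
  intros Hab; split.
  - constructor; [apply parent_None_not_target, root_spec | exact targets_nodup].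
  - exists (fun x => if Nat.eqb (root x) (root b) then rk x + rk (root a) + 1 else rk x).
    intros x y [E | E].
    + injection E as <- <-; rewrite !root_idem, Nat.eqb_refl.
      rewrite (proj2 (Nat.eqb_neq _ _) Hab); lia.
    + rewrite (root_edge _ _ E); pose proof (rank_increasing _ _ E).
      destruct (Nat.eqb (root y) (root b)); lia.
Qed.

End Roots.

Lemma forest_forestlike R G : forest R -> forestlike (R, G).
Proof. intros [ND [rk Hrk]]; apply (forest_forestlike_ranked R rk ND Hrk). Qed.

Definition replayable (n : nat) (S : sequent) : Prop :=
  forall R', forest R' -> inclusion label (linked (fst S)) (linked R') ->
    incl (rlabels R') (labels S) -> derivP n forestlike (R', snd S).

Lemma replayable_apc n R G (ws : nat -> label) : 0 < n ->
  (forall k j, k < j -> j <= n -> replayable n ((ws k, ws j) :: R, G)) ->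
  replayable n (R, G).
Proof.
  intros Hn IH R' HF HL HS; simpl in HL, HS |- *.
  pose proof HF as [ND [rk Hrk]].
  set (r := fun i => root R' rk (ws i)).
  assert (Hlinked : forall i, linked R' (ws i) (r i))
    by (intros i; apply linked_sym, root_linked; assumption).
  destruct (classic (exists k j, k < j /\ j <= n /\ r k = r j))
    as [[k [j [Hkj [Hjn Hr]]]] | Hdistinct].
  - apply (IH k j Hkj Hjn R' HF).
    + apply linked_cons; [exact HL |].
      apply rt_trans with (r k); [apply Hlinked | rewrite Hr; apply linked_sym, Hlinked].
    + apply (incl_tran HS), labels_incl_cons_rel.
  - apply d_apc with r; [apply forest_forestlike, HF | exact Hn |].
    intros k j Hkj Hjn; apply (IH k j Hkj Hjn).
    + apply forest_link_roots; [assumption.. |].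
      intros E; apply Hdistinct; exists k, j; auto.
    + apply linked_cons.
      * intros a b H; apply linked_cons_r, HL, H.
      * apply rt_trans with (r k); [apply linked_cons_r, Hlinked |].
        apply rt_trans with (r j); [apply linked_edge; left; reflexivity |].
        apply linked_cons_r, linked_sym, Hlinked.
    + assert (Hr : forall i, In (r i) (rlabels R') \/ r i = ws i)
        by (intros i; destruct (root_self_or_rlabel R' rk Hrk (ws i)); auto).
      simpl; apply incl_cons; [| apply incl_cons].
      * destruct (Hr k) as [H | ->]; [right; right; apply HS, H | left; reflexivity].
      * destruct (Hr j) as [H | ->]; [right; right; apply HS, H | right; left; reflexivity].
      * apply (incl_tran HS), labels_incl_cons_rel.
Qed.

Lemma derivable_replayable n S : derivable n S -> replayable n S.
Proof.
  induction 1 as [R G w p _ Hp Hnp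
    | R G w A B _ Hin _ IH1 _ IH2
    | R G w A B _ Hin _ IH
    | R G w v A _ Hin Hv _ IH
    | R G w u A _ Hin _ IH
    | R G u v _ Hv _ IH
    | R G w v A _ Hin Hv _ IH
    | R G w u A _ Hin Hwu _ IH
    | R G ws _ Hn _ IH];
    [..| exact (replayable_apc n R G ws Hn IH)];
    intros R' HF HL HS; simpl in HL, HS |- *;
    assert (HS' : forall e, incl (rlabels R') (labels (R, e :: G)))
      by (intros e; apply (incl_tran HS), labels_incl_cons_form).
  - apply d_id with w p; auto using forest_forestlike.
  - apply d_and with w A B; [apply forest_forestlike, HF | exact Hin | apply IH1 | apply IH2]; auto.
  - apply d_or with w A B; [apply forest_forestlike, HF | exact Hin | apply IH]; auto.
    apply (incl_tran (HS' (w, B))), labels_incl_cons_form.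
  - apply d_box with w v A; [apply forest_forestlike, HF | exact Hin | | apply IH]; auto.
    apply fresh_restrict with R; assumption.
  - apply d_dia with w u A; [apply forest_forestlike, HF | exact Hin | apply IH]; auto.
  - destruct (Nat.eq_dec u v) as [<- | Huv].
    (* A loop [R_1 u u] links nothing, so the rule is dropped. *)
    + apply IH; simpl; auto.
      * apply linked_cons; [exact HL | apply rt_refl].
      * apply (incl_tran HS), labels_incl_cons_rel.
    + apply d_ioa with u v; [apply forest_forestlike, HF | | apply IH].
      * apply fresh_restrict with R; assumption.
      * apply forest_cons_fresh; [exact HF | intros H; apply Hv, HS, H | exact Huv].
      * apply linked_cons_cons, HL.
      * exact (rlabels_incl_cons R R' G (u, v) HS).
  - apply d_stit with w v A; [apply forest_forestlike, HF | exact Hin | | apply IH].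
    * apply fresh_restrict with R; assumption.
    * apply forest_cons_fresh; [exact HF | intros H; apply Hv, HS, H |].
      intros <-; apply Hv, in_or_app; right; apply (in_map fst _ _ Hin).
    * apply linked_cons_cons, HL.
    * apply (incl_tran (rlabels_incl_cons _ _ _ _ HS)), labels_incl_cons_form.
  - apply d_pr with w u A; [apply forest_forestlike, HF | exact Hin | apply HL, Hwu | apply IH]; auto.
Qed.

Theorem corollary2 : forall (n : nat) (w : label) (phi : form),
  derivable n ([], [(w, phi)]) ->
  derivP n forestlike ([], [(w, phi)]).
Proof.
  intros n w phi H.
  apply (derivable_replayable n _ H []).
  - exact forest_nil.
  - intros a b Hab; exact Hab.
  - apply incl_nil_l.
Qed.
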